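(* $\Gamma_2(VP_3)/\Gamma_3(VP_3)\cong\mathbb{Z}^9$.
   Context: $VP_3$ is the group with generators $\lambda_{k,l}$, $1\le k\ne l\le 3$, and defining relations $\lambda_{k,i}\lambda_{k,j}\lambda_{i,j}=\lambda_{i,j}\lambda_{k,j}\lambda_{k,i}$ for all pairwise distinct $i,j,k\in\{1,2,3\}$. (Equivalently, it is the kernel of the homomorphism from the virtual braid group $VB_3$ to $S_3$ sending both $\sigma_i$ and $\rho_i$ to the transposition $(i\ i{+}1)$.) For a group $G$, $\Gamma_1(G)=G$, $\Gamma_i(G)=[\Gamma_{i-1}(G),G]$. *)

(* The group VP_3 is encoded by its presentation: elements are
   words in the generators lambda_{k,l} (k <> l in {1,2,3}, encoded as 'I_3)
   and their inverses, modulo the congruence [vp3_eqv] generated by free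
   cancellation and the defining relations. *)
From mathcomp Require Import all_boot all_order all_algebra.
Set Implicit Arguments. Unset Strict Implicit. Unset Printing Implicit Defensive.

Definition vp3_gen := {p : 'I_3 * 'I_3 | p.1 != p.2}.

(* a letter: a generator with an exponent flag (true = inverse) *)
Definition vp3_letter := (vp3_gen * bool)%type.
Definition vp3_word := seq vp3_letter.

Definition lam (k l : 'I_3) (h : k != l) : vp3_gen := exist _ (k, l) h.
Definition pos (g : vp3_gen) : vp3_letter := (g, false).
Definition inv_letter (x : vp3_letter) : vp3_letter := (x.1, ~~ x.2).

(* group operations on words: product = concatenation, identity = [::] *)
Definition winv (w : vp3_word) : vp3_word := rev (map inv_letter w).
Definition wcomm (x y : vp3_word) : vp3_word := winv x ++ winv y ++ x ++ y.

Inductive vp3_eqv : vp3_word -> vp3_word -> Prop :=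
| eqv_refl w : vp3_eqv w w
| eqv_sym u v : vp3_eqv u v -> vp3_eqv v u
| eqv_trans u v w : vp3_eqv u v -> vp3_eqv v w -> vp3_eqv u w
| eqv_cancel u v x : vp3_eqv (u ++ [:: x; inv_letter x] ++ v) (u ++ v)
| eqv_rel u v (i j k : 'I_3) (hki : k != i) (hkj : k != j) (hij : i != j) :
    vp3_eqv (u ++ [:: pos (lam hki); pos (lam hkj); pos (lam hij)] ++ v)
            (u ++ [:: pos (lam hij); pos (lam hkj); pos (lam hki)] ++ v).

Inductive gen_subgroup (S : vp3_word -> Prop) : vp3_word -> Prop :=
| gs_base w : S w -> gen_subgroup S w
| gs_one : gen_subgroup S [::]
| gs_mul u v : gen_subgroup S u -> gen_subgroup S v -> gen_subgroup S (u ++ v)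
| gs_inv u : gen_subgroup S u -> gen_subgroup S (winv u)
| gs_eqv u v : vp3_eqv u v -> gen_subgroup S u -> gen_subgroup S v.

(* lower central series, shifted: LCS n = Gamma_{n+1}(VP_3) *)
Fixpoint LCS (n : nat) : vp3_word -> Prop :=
  match n with
  | 0 => fun _ => True
  | n'.+1 => gen_subgroup (fun w => exists x y, LCS n' x /\ w = wcomm x y)
  end.

Definition Gamma (i : nat) : vp3_word -> Prop := LCS i.-1.

(* Let bform be the lower triangular bilinear form on Z^6 (exponent vectors in the six
   generators) whose antisymmetrisation maps each pair of generators to the coordinates in
   Z^9 of their commutator.  Then coord2 (x_1 ... x_n) = sum_(i < j) bform x_i x_j
   satisfies coord2 (u v) = coord2 u + coord2 v + bform (abel u) (abel v).  Since bform
   vanishes on the diagonal and its antisymmetrisation kills every relator, coord2 is well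
   defined on VP_3; it is additive on Gamma_2, zero on Gamma_3 and hits every basis vector.
   Conversely, modulo Gamma_3 the commutator is central and bilinear, so every element of
   Gamma_2 is a product of commutators of generators; the relators express six of these
   through the other nine, hence each u in Gamma_2 is congruent modulo Gamma_3 to the
   product of the nine basis commutators raised to the coordinates coord2 u. *)

From mathcomp Require Import all_boot all_order all_algebra.
From Stdlib Require Import Setoid Morphisms.
From mathcomp Require Import ring.
Import GRing.Theory.
Set Implicit Arguments. Unset Strict Implicit. Unset Printing Implicit Defensive.

Local Notation eqv := vp3_eqv.
#[local] Hint Resolve eqv_refl : core.

(** * Words as elements of VP_3 *)

Lemma eqv_catl a u v : eqv u v -> eqv (a ++ u) (a ++ v).
Proof.
elim=> {u v} [w | u v _ | u v w _ IHuv _ IHvw | u v x | u v i j k hki hkj hij].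
- exact: eqv_refl.
- exact: eqv_sym.
- exact: eqv_trans IHuv IHvw.
- by rewrite !(catA a u); apply: eqv_cancel.
- by rewrite !(catA a u); apply: eqv_rel.
Qed.

Lemma eqv_catr b u v : eqv u v -> eqv (u ++ b) (v ++ b).
Proof.
elim=> {u v} [w | u v _ | u v w _ IHuv _ IHvw | u v x | u v i j k hki hkj hij].
- exact: eqv_refl.
- exact: eqv_sym.
- exact: eqv_trans IHuv IHvw.
- by rewrite -!catA; apply: eqv_cancel.
- by rewrite -!catA; apply: eqv_rel.
Qed.

#[local] Instance eqv_Equivalence : Equivalence eqv.
Proof. by split; [exact: eqv_refl | exact: eqv_sym | exact: eqv_trans]. Qed.

#[local] Instance cat_eqv_Proper : Proper (eqv ==> eqv ==> eqv) (@cat vp3_letter).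
Proof. by move=> u u' Hu v v' Hv; apply: eqv_trans (eqv_catr v Hu) (eqv_catl u' Hv). Qed.

Lemma inv_letterK : involutive inv_letter.
Proof. by case=> g b; rewrite /inv_letter /= negbK. Qed.

Lemma winvK : involutive winv.
Proof. by move=> u; rewrite /winv map_rev revK (mapK inv_letterK). Qed.

Lemma winv_cat u v : winv (u ++ v) = winv v ++ winv u.
Proof. by rewrite /winv map_cat rev_cat. Qed.

Lemma wmulgV u : eqv (u ++ winv u) [::].
Proof.
elim: u => [|x u IH]; first reflexivity.
rewrite -cat1s winv_cat -catA (catA u) IH.
exact: (eqv_cancel [::] [::] x).
Qed.

Lemma wmulVg u : eqv (winv u ++ u) [::].
Proof. by have := wmulgV (winv u); rewrite winvK. Qed.

Lemma wmulKVg u c : eqv (u ++ (winv u ++ c)) c.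
Proof. by rewrite catA wmulgV. Qed.

Lemma wmulKg u c : eqv (winv u ++ (u ++ c)) c.
Proof. by rewrite catA wmulVg. Qed.

Lemma winv_wcomm x y : winv (wcomm x y) = wcomm y x.
Proof. by rewrite /wcomm !winv_cat !winvK -!catA. Qed.

Lemma wcommC a b : eqv (a ++ b) (b ++ a ++ wcomm a b).
Proof. by rewrite /wcomm !wmulKVg. Qed.

Definition wconj (w g : vp3_word) : vp3_word := winv g ++ w ++ g.

Lemma winv_wconj w g : winv (wconj w g) = wconj (winv w) g.
Proof. by rewrite /wconj !winv_cat winvK catA. Qed.

Lemma wconjR x y g : eqv (wconj (wcomm x y) g) (wcomm (wconj x g) (wconj y g)).
Proof. by rewrite /wcomm !winv_wconj /wconj -!catA !wmulKVg. Qed.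

(** * The lower central series *)

#[local] Instance gen_subgroup_Proper S : Proper (eqv ==> iff) (gen_subgroup S).
Proof. by move=> u v Huv; split; apply: gs_eqv => //; apply: eqv_sym. Qed.

Lemma gen_subgroup_conj S :
    (forall w g, S w -> gen_subgroup S (wconj w g)) ->
  forall w g, gen_subgroup S w -> gen_subgroup S (wconj w g).
Proof.
move=> SJ w g; elim=> {w} [w /SJ // | | u v _ Ju _ Jv | u _ Ju | u v Huv _ Ju].
- by apply: (gs_eqv _ (gs_one S)); rewrite /wconj /= wmulVg.
- have <- : eqv (wconj u g ++ wconj v g) (wconj (u ++ v) g).
    by rewrite /wconj -!catA wmulKVg.
  exact: gs_mul.
- by rewrite -winv_wconj; apply: gs_inv.
- by apply: gs_eqv Ju; rewrite /wconj Huv.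
Qed.

Lemma LCS_nil n : LCS n [::].
Proof. by case: n => //= n; apply: gs_one. Qed.

Lemma LCS_cat n u v : LCS n u -> LCS n v -> LCS n (u ++ v).
Proof. by case: n => //= n; apply: gs_mul. Qed.

Lemma LCS_winv n u : LCS n u -> LCS n (winv u).
Proof. by case: n => //= n; apply: gs_inv. Qed.

#[local] Instance LCS_Proper n : Proper (eqv ==> iff) (LCS n).
Proof. by case: n => //= n; apply: gen_subgroup_Proper. Qed.

Lemma LCS_wcomm n x y : LCS n x -> LCS n.+1 (wcomm x y).
Proof. by move=> Hx; apply: gs_base; exists x, y. Qed.

Lemma LCS1_wcomm x y : LCS 1 (wcomm x y).
Proof. exact: LCS_wcomm. Qed.

Lemma LCS_conj n w g : LCS n w -> LCS n (wconj w g).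
Proof.
elim: n w g => [//|n IH] w g /=.
apply: gen_subgroup_conj => {}w {}g [x [y [Hx ->]]].
by rewrite wconjR; apply: LCS_wcomm; apply: IH.
Qed.

Lemma LCS_S n u : LCS n.+1 u -> LCS n u.
Proof.
elim=> {u} [_ [x [y [Hx ->]]] | | u v _ Hu _ Hv | u _ Hu | u v Huv _ Hu].
- exact: LCS_cat (LCS_winv Hx) (LCS_conj y Hx).
- exact: LCS_nil.
- exact: LCS_cat.
- exact: LCS_winv.
- by rewrite -Huv.
Qed.

Definition cong3 u v := LCS 2 (u ++ winv v).

#[local] Instance cong3_Equivalence : Equivalence cong3.
Proof.
split=> [u | u v | u v w]; rewrite /cong3.
- by rewrite wmulgV; apply: LCS_nil.
- by move/LCS_winv; rewrite winv_cat winvK.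
- by move=> Huv Hvw; have := LCS_cat Huv Hvw; rewrite -catA wmulKg.
Qed.

#[local] Hint Extern 0 (cong3 _ _) => reflexivity : core.

#[local] Instance eqv_cong3 : subrelation eqv cong3.
Proof. by move=> u v Huv; rewrite /cong3 Huv wmulgV; apply: LCS_nil. Qed.

#[local] Instance cat_cong3_Proper : Proper (cong3 ==> cong3 ==> cong3) (@cat vp3_letter).
Proof.
move=> u u' Hu v v' Hv; rewrite /cong3 winv_cat.
have := LCS_cat (LCS_conj (winv u) Hv) Hu.
by rewrite /wconj winvK -!catA wmulKg.
Qed.

#[local] Instance winv_cong3_Proper : Proper (cong3 ==> cong3) winv.
Proof.
move=> u v Huv; have := LCS_conj u (LCS_winv Huv).
by rewrite /cong3 /wconj winv_cat !winvK -!catA wmulVg cats0.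
Qed.

Lemma cong3_lcancel a u v : cong3 (a ++ u) (a ++ v) -> cong3 u v.
Proof. by move=> Huv; rewrite -(wmulKg a u) Huv wmulKg. Qed.

Lemma cong3_central c g : LCS 1 c -> cong3 (c ++ g) (g ++ c).
Proof.
move=> Hc; have := LCS_wcomm (winv g) (LCS_winv Hc).
by rewrite /cong3 /wcomm winv_cat !winvK -!catA.
Qed.

Lemma cong3_wcommMl a b y : cong3 (wcomm (a ++ b) y) (wcomm a y ++ wcomm b y).
Proof.
have -> : eqv (wcomm (a ++ b) y) (winv b ++ (wcomm a y ++ (b ++ wcomm b y))).
  by rewrite /wcomm winv_cat -!catA !wmulKVg.
rewrite catA -(cong3_central _ (LCS1_wcomm a y)) -catA.
by rewrite wmulKg.
Qed.

Lemma cong3_wcommVl a y : cong3 (wcomm (winv a) y) (winv (wcomm a y)).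
Proof.
have -> : eqv (wcomm (winv a) y) (a ++ (winv (wcomm a y) ++ winv a)).
  by rewrite winv_wcomm /wcomm winvK -!catA wmulgV cats0.
by rewrite catA -(cong3_central _ (LCS_winv (LCS1_wcomm a y))) -catA wmulgV cats0.
Qed.

Lemma cong3_swap a b r : cong3 (a ++ b ++ r) (b ++ a ++ r ++ wcomm a b).
Proof.
have := wcommC a b; have := LCS1_wcomm a b; move: (wcomm a b) => c Hc Eab.
by rewrite catA Eab -!catA (cong3_central r Hc).
Qed.

Lemma cong3_relator x y z : eqv (x ++ y ++ z) (z ++ y ++ x) ->
  cong3 (wcomm x z) (winv (wcomm x y) ++ winv (wcomm y z)).
Proof.
(* Moving x past y, x past z and y past z turns x y z into z y x [x,y] [x,z] [y,z]. *)
move=> Hxyz; have := cong3_swap x y z.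
rewrite (cong3_swap x z) (cong3_swap y z) Hxyz.
move: (wcomm x y) (wcomm x z) (wcomm y z) => c1 c2 c3.
have -> : z ++ y ++ (x ++ c1 ++ c2) ++ c3 = (z ++ y ++ x) ++ (c1 ++ c2 ++ c3).
  by rewrite -!catA.
rewrite -{1}[z ++ y ++ x]cats0 => /cong3_lcancel Hc.
have -> : eqv c2 (winv c1 ++ (c1 ++ c2 ++ c3) ++ winv c3).
  by rewrite -!catA wmulKg wmulgV cats0.
by rewrite -Hc.
Qed.

(** * Coordinates on Gamma_2 / Gamma_3 *)

(* comm_coord p q, for q < p, is the image in Z^9 of the commutator of the generators
   gen_of p and gen_of q: a unit vector for the nine basis pairs (basis_pair below), and
   for the six other pairs the combination forced by the relators.  Entries with q >= p
   are zero, so that bform is lower triangular. *)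
Local Notation e9 m := (delta_mx ord0 (@Ordinal 9 m isT) : 'rV[int]_9).

Definition comm_coord (p q : nat) : 'rV[int]_9 :=
  match p, q with
  | 1, 0 => e9 0 | 2, 0 => e9 1 | 3, 1 => e9 2 | 3, 2 => e9 3 | 4, 1 => e9 4
  | 4, 2 => e9 5 | 5, 0 => e9 6 | 5, 3 => e9 7 | 5, 4 => e9 8
  | 2, 1 => e9 3 - e9 2 | 3, 0 => - e9 0 - e9 2 | 4, 0 => e9 8 - e9 6
  | 4, 3 => e9 3 - e9 5 | 5, 1 => e9 0 - e9 6 | 5, 2 => - e9 8 - e9 5
  | _, _ => 0
  end%R.

Definition relator_indices : seq (nat * nat * nat) :=
  [:: (4, 5, 0); (2, 3, 1); (5, 4, 2); (0, 1, 3); (3, 2, 4); (1, 0, 5)].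

Local Open Scope ring_scope.

Local Ltac rowring := apply/rowP => ?; rewrite /= !mxE; ring.

Lemma comm_coord_diag p : comm_coord p p = 0.
Proof. by case: p => [|[|[|[|[|[|]]]]]]. Qed.

Lemma comm_coord_relator p q r : (p, q, r) \in relator_indices ->
  comm_coord p q + comm_coord p r + comm_coord q r =
  comm_coord r q + comm_coord r p + comm_coord q p.
Proof.
rewrite !inE; do 5 (case/predU1P => [[-> -> ->]|]; first by rowring).
by move/eqP => [-> -> ->]; rowring.
Qed.

(* Generator indices are 0-based: gens lists the paper's
   lambda_12, lambda_13, lambda_21, lambda_23, lambda_31, lambda_32. *)
Definition gens : seq vp3_gen :=
  [:: @lam 0 1 isT; @lam 0 2 isT; @lam 1 0 isT; @lam 1 2 isT; @lam 2 0 isT; @lam 2 1 isT].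

Definition gen_of (p : nat) : vp3_gen := nth (@lam 0 1 isT) gens p.
Definition gen_index (g : vp3_gen) : nat := index g gens.

Lemma mem_gens g : g \in gens.
Proof. by case: g => [[[[|[|[|k]]] Hk] [[|[|[|l]]] Hl]] /= Hkl]. Qed.

Lemma gen_indexK : cancel gen_index gen_of.
Proof. by move=> g; apply: nth_index; apply: mem_gens. Qed.

Lemma gen_index_lt g : (gen_index g < 6)%N.
Proof. by rewrite /gen_index -[6%N]/(size gens) index_mem mem_gens. Qed.

Lemma gen_ofK p : (p < 6)%N -> gen_index (gen_of p) = p.
Proof. by move=> lt_p6; apply: index_uniq. Qed.

Lemma relator_gen_indices (i j k : 'I_3) (hki : k != i) (hkj : k != j) (hij : i != j) :
  (gen_index (lam hki), gen_index (lam hkj), gen_index (lam hij)) \in relator_indices.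
Proof. by case: i j k hki hkj hij => [[|[|[|i]]] ?] [[|[|[|j]]] ?] [[|[|[|k]]] ?]. Qed.

Definition gen_vec (g : vp3_gen) : {ffun vp3_gen -> int} := [ffun h => (h == g)%:R].

Definition letter_vec (x : vp3_letter) : {ffun vp3_gen -> int} :=
  if x.2 then - gen_vec x.1 else gen_vec x.1.

Lemma letter_vec_inv x : letter_vec (inv_letter x) = - letter_vec x.
Proof. by case: x => g []; rewrite /letter_vec /= ?opprK. Qed.

Definition bform (a b : {ffun vp3_gen -> int}) : 'rV[int]_9 :=
  \sum_g \sum_h (a g * b h) *: comm_coord (gen_index g) (gen_index h).

Lemma bformDl a a' b : bform (a + a') b = bform a b + bform a' b.
Proof.
rewrite /bform -big_split; apply: eq_bigr => g _.
by rewrite -big_split; apply: eq_bigr => h _; rewrite ffunE mulrDl scalerDl.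
Qed.

Lemma bformDr a b b' : bform a (b + b') = bform a b + bform a b'.
Proof.
rewrite /bform -big_split; apply: eq_bigr => g _.
by rewrite -big_split; apply: eq_bigr => h _; rewrite ffunE mulrDr scalerDl.
Qed.

Lemma bformNl a b : bform (- a) b = - bform a b.
Proof.
rewrite /bform -sumrN; apply: eq_bigr => g _.
by rewrite -sumrN; apply: eq_bigr => h _; rewrite ffunE mulNr scaleNr.
Qed.

Lemma bformNr a b : bform a (- b) = - bform a b.
Proof.
rewrite /bform -sumrN; apply: eq_bigr => g _.
by rewrite -sumrN; apply: eq_bigr => h _; rewrite ffunE mulrN scaleNr.
Qed.

Lemma bform0l b : bform 0 b = 0.
Proof. by rewrite /bform big1 // => g _; rewrite big1 // => h _; rewrite ffunE mul0r scale0r. Qed.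

Lemma bform0r a : bform a 0 = 0.
Proof. by rewrite /bform big1 // => g _; rewrite big1 // => h _; rewrite ffunE mulr0 scale0r. Qed.

Lemma bform_gen_vec g h :
  bform (gen_vec g) (gen_vec h) = comm_coord (gen_index g) (gen_index h).
Proof.
rewrite /bform (bigD1 g) //= [X in _ + X]big1 ?addr0 => [|g' ng'g]; last first.
  by rewrite big1 // => h' _; rewrite !ffunE (negbTE ng'g) mul0r scale0r.
rewrite (bigD1 h) //= [X in _ + X]big1 ?addr0 => [|h' nh'h]; last first.
  by rewrite !ffunE (negbTE nh'h) mulr0 scale0r.
by rewrite !ffunE !eqxx mulr1 scale1r.
Qed.

Lemma bform_letter_vec_diag x : bform (letter_vec x) (letter_vec x) = 0.
Proof.
case: x => g [] /=; rewrite /letter_vec /= ?bformNl ?bformNr ?opprK.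
all: by rewrite bform_gen_vec comm_coord_diag.
Qed.

Definition abel (w : vp3_word) : {ffun vp3_gen -> int} := \sum_(x <- w) letter_vec x.

Lemma abel_cons x w : abel (x :: w) = letter_vec x + abel w.
Proof. exact: big_cons. Qed.

Lemma abel_nil : abel [::] = 0.
Proof. exact: big_nil. Qed.

Lemma abel_cat u v : abel (u ++ v) = abel u + abel v.
Proof. exact: big_cat. Qed.

Fixpoint coord2 (w : vp3_word) : 'rV[int]_9 :=
  if w is x :: w' then bform (letter_vec x) (abel w') + coord2 w' else 0.

Lemma coord2_cat u v : coord2 (u ++ v) = coord2 u + coord2 v + bform (abel u) (abel v).
Proof.
elim: u => [|x u IH] /=; first by rewrite abel_nil bform0l add0r addr0.
rewrite IH abel_cat abel_cons bformDr bformDl.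
by rowring.
Qed.

Lemma abel_coord2_eqv u v : eqv u v -> abel u = abel v /\ coord2 u = coord2 v.
Proof.
have mid a b m m' : abel m = abel m' -> coord2 m = coord2 m' ->
    abel (a ++ m ++ b) = abel (a ++ m' ++ b) /\ coord2 (a ++ m ++ b) = coord2 (a ++ m' ++ b).
  by move=> Ha Hc; rewrite !coord2_cat !abel_cat Ha Hc.
elim=> {u v} [//|u v _ [-> ->] //|u v w _ [-> ->] _ [-> ->] //|u v x|u v i j k hki hkj hij].
- rewrite -[u ++ v]/(u ++ [::] ++ v); apply: mid => /=.
    by rewrite !abel_cons letter_vec_inv abel_nil addr0 subrr.
  rewrite abel_cons letter_vec_inv abel_nil addr0 bformNr bform_letter_vec_diag.
  by rewrite bform0r !addr0 oppr0.
- apply: mid => /=.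
    by rewrite !abel_cons abel_nil !addr0 addrC addrAC addrC.
  rewrite !abel_cons abel_nil !bform0r !addr0 !bformDr !bform_gen_vec.
  exact: comm_coord_relator (relator_gen_indices hki hkj hij).
Qed.

Lemma abel_winv u : abel (winv u) = - abel u.
Proof.
have [+ _] := abel_coord2_eqv (wmulVg u).
by rewrite abel_cat abel_nil => /eqP; rewrite addr_eq0 => /eqP.
Qed.

Lemma coord2_winv u : coord2 (winv u) = - coord2 u + bform (abel u) (abel u).
Proof.
have [_] := abel_coord2_eqv (wmulVg u).
rewrite coord2_cat abel_winv bformNl /= => H.
by apply/eqP; rewrite -subr_eq0 -H; apply/eqP; rowring.
Qed.

Lemma coord2_wcomm x y : coord2 (wcomm x y) = bform (abel x) (abel y) - bform (abel y) (abel x).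
Proof.
rewrite /wcomm !coord2_cat !abel_cat !coord2_winv !abel_winv.
rewrite !(bformDl, bformDr, bformNl, bformNr).
by rowring.
Qed.

Lemma coord2_catl u v : abel u = 0 -> coord2 (u ++ v) = coord2 u + coord2 v.
Proof. by move=> Hu; rewrite coord2_cat Hu bform0l addr0. Qed.

Lemma abel_LCS1 u : LCS 1 u -> abel u = 0.
Proof.
elim=> {u} [_ [x [y [_ ->]]] | | u v _ Hu _ Hv | u _ Hu | u v Huv _ Hu].
- by rewrite /wcomm !abel_cat !abel_winv addrCA addKr addNr.
- exact: abel_nil.
- by rewrite abel_cat Hu Hv addr0.
- by rewrite abel_winv Hu oppr0.
- by rewrite -(abel_coord2_eqv Huv).1.
Qed.

Lemma coord2_LCS2 u : LCS 2 u -> coord2 u = 0.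
Proof.
elim=> {u} [_ [x [y [Hx ->]]] | | u v Hu IHu _ IHv | u Hu IHu | u v Huv _ IHu].
- by rewrite coord2_wcomm (abel_LCS1 Hx) bform0l bform0r subrr.
- by [].
- by rewrite coord2_catl ?IHu ?IHv ?addr0 // (abel_LCS1 (LCS_S (n:=1) Hu)).
- by rewrite coord2_winv IHu (abel_LCS1 (LCS_S (n:=1) Hu)) bform0l oppr0 addr0.
- by rewrite -(abel_coord2_eqv Huv).2.
Qed.

Lemma coord2_cong3 u v : LCS 1 u -> LCS 1 v -> cong3 u v -> coord2 u = coord2 v.
Proof.
move=> Hu Hv /coord2_LCS2.
rewrite coord2_catl ?(abel_LCS1 Hu) // coord2_winv (abel_LCS1 Hv) bform0l addr0.
by move/eqP; rewrite subr_eq0 => /eqP.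
Qed.

(** * Normal forms modulo Gamma_3 *)

Definition wexp (c : vp3_word) (n : int) : vp3_word :=
  match n with
  | Posz k => flatten (nseq k c)
  | Negz k => flatten (nseq k.+1 (winv c))
  end.

Lemma wexpS c n : eqv (c ++ wexp c n) (wexp c (1 + n)).
Proof.
case: n => [k|[|k]] /=.
- by rewrite add0n.
- by rewrite cats0 wmulgV.
- by rewrite subSS subn0 wmulKVg.
Qed.

Lemma wexpN c n : wexp c (- n.+1%:Z) = winv c ++ wexp c (- n%:Z).
Proof. by case: n => [|n] /=; rewrite ?cats0. Qed.

Lemma wexpD c a b : eqv (wexp c a ++ wexp c b) (wexp c (a + b)).
Proof.
elim/int_ind: a => [|n IH|n IH]; first by rewrite add0r.
- by rewrite [in X in eqv _ X]intS -addrA -wexpS -IH catA.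
- rewrite wexpN -catA IH.
  have -> : - n%:Z + b = 1 + (- n.+1%:Z + b) by rewrite intS opprD !addrA subrr add0r.
  by rewrite -wexpS wmulKg.
Qed.

Lemma LCS_wexp n c k : LCS n c -> LCS n (wexp c k).
Proof.
have LCS_rep d : LCS n d -> forall m, LCS n (flatten (nseq m d)).
  by move=> Hd; elim=> [|m IH]; [exact: LCS_nil | exact: LCS_cat].
by move=> Hc; case: k => k; apply: LCS_rep => //; apply: LCS_winv.
Qed.

Lemma coord2_wexp c n : LCS 1 c -> coord2 (wexp c n) = n *: coord2 c.
Proof.
move=> Hc; have Hc0 := abel_LCS1 Hc.
elim/int_ind: n => [|n IH|n IH]; first by rewrite scale0r.
- by rewrite intS scalerDl scale1r -IH -coord2_catl.
- rewrite wexpN coord2_catl ?abel_winv ?Hc0 ?oppr0 // IH coord2_winv Hc0 bform0l addr0.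
  by rewrite intS opprD scalerDl scaleN1r.
Qed.

Definition gcomm (p q : nat) : vp3_word := wcomm [:: pos (gen_of p)] [:: pos (gen_of q)].

Lemma coord2_gcomm p q : (p < 6)%N -> (q < 6)%N ->
  coord2 (gcomm p q) = comm_coord p q - comm_coord q p.
Proof.
move=> lt_p6 lt_q6; rewrite coord2_wcomm !abel_cons abel_nil !addr0 !bform_gen_vec.
by rewrite !gen_ofK.
Qed.

Definition basis_pair (m : 'I_9) : nat * nat :=
  nth (0, 0) [:: (1, 0); (2, 0); (3, 1); (3, 2); (4, 1); (4, 2); (5, 0); (5, 3); (5, 4)]%N m.

Definition basis_comm (m : 'I_9) : vp3_word := gcomm (basis_pair m).1 (basis_pair m).2.

Lemma coord2_basis_comm m : coord2 (basis_comm m) = delta_mx 0 m.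
Proof.
case: m => [[|[|[|[|[|[|[|[|[|m]]]]]]]]] Hm] //; rewrite coord2_gcomm //= subr0;
  by congr delta_mx; apply: val_inj.
Qed.

Definition basis_word (z : 'rV[int]_9) : vp3_word :=
  \big[cat/[::]]_(m < 9) wexp (basis_comm m) (z 0 m).

Lemma LCS1_basis_word z : LCS 1 (basis_word z).
Proof. by apply: big_ind => [|u v|m _]; [exact: LCS_nil | exact: LCS_cat | apply/LCS_wexp/LCS1_wcomm]. Qed.

Lemma coord2_basis_word z : coord2 (basis_word z) = z.
Proof.
have [_ ->] : abel (basis_word z) = 0 /\
              coord2 (basis_word z) = \sum_(m < 9) z 0 m *: delta_mx 0 m.
  apply: (big_ind2 (fun w v => abel w = 0 /\ coord2 w = v)) => [|u a v b [Hu <-] [Hv <-] | m _].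
  - by rewrite abel_nil.
  - by rewrite abel_cat coord2_catl // Hu Hv addr0.
  - have Hc : LCS 1 (basis_comm m) by apply: LCS1_wcomm.
    by rewrite abel_LCS1 ?coord2_wexp ?coord2_basis_comm //; apply: LCS_wexp.
by rewrite [RHS]matrix_sum_delta big_ord1.
Qed.

Lemma basis_word0 : basis_word 0 = [::].
Proof. by rewrite /basis_word big1 // => m _; rewrite mxE. Qed.

Lemma basis_word_delta m : basis_word (delta_mx 0 m) = basis_comm m.
Proof.
rewrite /basis_word (eq_bigr (fun i => if i == m then basis_comm i else [::])).
  by rewrite -big_mkcond big_pred1_eq.
by move=> i _; rewrite mxE eqxx /=; case: (i == m); rewrite /= ?cats0.
Qed.

Lemma cong3_big_split (I : Type) (r : seq I) (A B : I -> vp3_word) :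
    (forall i, LCS 1 (B i)) ->
  cong3 (\big[cat/[::]]_(i <- r) (A i ++ B i))
        (\big[cat/[::]]_(i <- r) A i ++ \big[cat/[::]]_(i <- r) B i).
Proof.
move=> HB; elim: r => [|i r IH]; first by rewrite !big_nil.
rewrite !big_cons IH; set AA := \big[cat/[::]]_(j <- r) A j.
by rewrite -!catA (catA AA) -(cong3_central AA (HB i)) -catA.
Qed.

Lemma basis_wordD z w : cong3 (basis_word z ++ basis_word w) (basis_word (z + w)).
Proof.
rewrite -cong3_big_split => [|m]; last by apply/LCS_wexp/LCS1_wcomm.
apply: eqv_cong3; apply: big_ind2 => [//|u u' v v' -> -> //|m _].
by rewrite mxE wexpD.
Qed.

Lemma basis_wordN z : cong3 (winv (basis_word z)) (basis_word (- z)).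
Proof.
by rewrite -(wmulKg (basis_word z) (basis_word (- z))) basis_wordD subrr basis_word0 cats0.
Qed.

Definition normal3 u := cong3 u (basis_word (coord2 u)).

Lemma normal3_nil : normal3 [::].
Proof. by rewrite /normal3 /= basis_word0. Qed.

Lemma normal3_cat u v : LCS 1 u -> normal3 u -> normal3 v -> normal3 (u ++ v).
Proof.
rewrite /normal3 => Hu Nu Nv; rewrite (coord2_catl _ (abel_LCS1 Hu)) -basis_wordD.
by rewrite -Nu -Nv.
Qed.

Lemma normal3_winv u : LCS 1 u -> normal3 u -> normal3 (winv u).
Proof.
rewrite /normal3 => Hu Nu; rewrite coord2_winv (abel_LCS1 Hu) bform0l addr0.
by rewrite -basis_wordN -Nu.
Qed.

Lemma normal3_cong3 u v : LCS 1 u -> LCS 1 v -> cong3 u v -> normal3 v -> normal3 u.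
Proof. by move=> Hu Hv Huv; rewrite /normal3 (coord2_cong3 Hu Hv Huv) Huv. Qed.

Lemma normal3_wcommC x y : normal3 (wcomm x y) -> normal3 (wcomm y x).
Proof. by move=> Nxy; rewrite -winv_wcomm; apply: normal3_winv Nxy; apply: LCS1_wcomm. Qed.

Lemma normal3_wcommMl a b y :
  normal3 (wcomm a y) -> normal3 (wcomm b y) -> normal3 (wcomm (a ++ b) y).
Proof.
move=> Na Nb; apply: normal3_cong3 (cong3_wcommMl a b y) _.
- exact: LCS1_wcomm.
- by apply: LCS_cat; apply: LCS1_wcomm.
- by apply: normal3_cat => //; apply: LCS1_wcomm.
Qed.

Lemma normal3_wcommVl a y : normal3 (wcomm a y) -> normal3 (wcomm (winv a) y).
Proof.
move=> Na; apply: normal3_cong3 (cong3_wcommVl a y) _.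
- exact: LCS1_wcomm.
- by apply: LCS_winv; apply: LCS1_wcomm.
- by apply: normal3_winv => //; apply: LCS1_wcomm.
Qed.

Lemma normal3_wcomm_relator x y z : eqv (x ++ y ++ z) (z ++ y ++ x) ->
  normal3 (wcomm x y) -> normal3 (wcomm y z) -> normal3 (wcomm x z).
Proof.
move=> Hxyz Nxy Nyz; apply: normal3_cong3 (cong3_relator Hxyz) _.
- exact: LCS1_wcomm.
- by apply: LCS_cat; apply: LCS_winv; apply: LCS1_wcomm.
- by apply: normal3_cat; [apply/LCS_winv/LCS1_wcomm | apply/normal3_winv/Nxy/LCS1_wcomm
                        | apply/normal3_winv/Nyz/LCS1_wcomm].
Qed.

Lemma eqv_relator (i j k : 'I_3) (hki : k != i) (hkj : k != j) (hij : i != j) :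
  eqv ([:: pos (lam hki)] ++ [:: pos (lam hkj)] ++ [:: pos (lam hij)])
      ([:: pos (lam hij)] ++ [:: pos (lam hkj)] ++ [:: pos (lam hki)]).
Proof. exact: (eqv_rel [::] [::]). Qed.

Lemma normal3_wcomm_nil y : normal3 (wcomm [::] y).
Proof. by apply: normal3_cong3 normal3_nil; [apply: LCS1_wcomm | apply: LCS_nil | rewrite /wcomm wmulVg]. Qed.

Lemma normal3_wcommgg x : normal3 (wcomm x x).
Proof. by apply: normal3_cong3 normal3_nil; [apply: LCS1_wcomm | apply: LCS_nil | rewrite /wcomm wmulKg wmulVg]. Qed.

Lemma normal3_gcomm_lower p q : (p < 6)%N -> (q < p)%N -> normal3 (gcomm p q).
Proof.
have basis (m : 'I_9) : normal3 (gcomm (basis_pair m).1 (basis_pair m).2).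
  by rewrite /normal3 coord2_basis_comm basis_word_delta.
have rel i j k hki hkj hij := normal3_wcomm_relator (@eqv_relator i j k hki hkj hij).
case: p q => [|[|[|[|[|[|p]]]]]] [|[|[|[|[|[|q]]]]]] //= _ _.
- exact: (basis 0).
- exact: (basis 1).
- exact: (rel 0 2 1 isT isT isT (normal3_wcommC (basis 3)) (basis 2)).
- exact/normal3_wcommC/(rel 1 2 0 isT isT isT (normal3_wcommC (basis 0)) (normal3_wcommC (basis 2))).
- exact: (basis 2).
- exact: (basis 3).
- exact: (rel 0 1 2 isT isT isT (normal3_wcommC (basis 8)) (basis 6)).
- exact: (basis 4).
- exact: (basis 5).
- exact/normal3_wcommC/(rel 2 0 1 isT isT isT (basis 3) (normal3_wcommC (basis 5))).
- exact: (basis 6).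
- exact/normal3_wcommC/(rel 2 1 0 isT isT isT (basis 0) (normal3_wcommC (basis 6))).
- exact: (rel 1 0 2 isT isT isT (basis 8) (basis 5)).
- exact: (basis 7).
- exact: (basis 8).
Qed.

Lemma normal3_gcomm p q : (p < 6)%N -> (q < 6)%N -> normal3 (gcomm p q).
Proof.
case: (ltngtP q p) => [lt_qp lt_p6 _ | lt_pq _ lt_q6 | -> _ _]; last exact: normal3_wcommgg.
- exact: normal3_gcomm_lower.
- exact/normal3_wcommC/normal3_gcomm_lower.
Qed.

Lemma normal3_wcomm_letters x y : normal3 (wcomm [:: x] [:: y]).
Proof.
have Ngens g h : normal3 (wcomm [:: pos g] [:: pos h]).
  by rewrite -(gen_indexK g) -(gen_indexK h); apply: normal3_gcomm; apply: gen_index_lt.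
have inv_pos g : [:: (g, true)] = winv [:: pos g] by [].
case: x y => [g []] [h []]; rewrite ?inv_pos; last exact: Ngens.
- exact/normal3_wcommVl/normal3_wcommC/normal3_wcommVl/normal3_wcommC/Ngens.
- exact/normal3_wcommVl/Ngens.
- exact/normal3_wcommC/normal3_wcommVl/normal3_wcommC/Ngens.
Qed.

Lemma normal3_wcomm x y : normal3 (wcomm x y).
Proof.
elim: x => [|l x IHx]; first exact: normal3_wcomm_nil.
apply: (normal3_wcommMl (a := [:: l])) IHx; apply: normal3_wcommC.
elim: y => [|l' y IHy]; first exact: normal3_wcomm_nil.
apply: (normal3_wcommMl (a := [:: l'])) IHy; apply: normal3_wcommC.
exact: normal3_wcomm_letters.
Qed.

Lemma normal3_LCS1 u : LCS 1 u -> normal3 u.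
Proof.
elim=> {u} [_ [x [y [_ ->]]] | | u v Hu Nu _ Nv | u Hu Nu | u v Huv Hu Nu].
- exact: normal3_wcomm.
- exact: normal3_nil.
- exact: normal3_cat.
- exact: normal3_winv.
- have Hv : LCS 1 v by rewrite -Huv.
  by apply: normal3_cong3 Nu => //; symmetry; apply: eqv_cong3.
Qed.

Theorem lemma5p6 :
  exists f : vp3_word -> 'rV[int]_9,
    (forall u v, Gamma 2 u -> vp3_eqv u v -> f u = f v) /\
    (forall u v, Gamma 2 u -> Gamma 2 v -> f (u ++ v) = f u + f v) /\
    (forall z : 'rV[int]_9, exists u, Gamma 2 u /\ f u = z) /\
    (forall u, Gamma 2 u -> (f u = 0 <-> Gamma 3 u)).
Proof.
exists coord2; split; [|split; [|split]].
- by move=> u v _ /abel_coord2_eqv [].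
- by move=> u v Hu _; apply: coord2_catl; apply: abel_LCS1.
- by move=> z; exists (basis_word z); split; [apply: LCS1_basis_word | apply: coord2_basis_word].
- move=> u Hu; split=> [coord2_u0 | /coord2_LCS2 //].
  by have := normal3_LCS1 Hu; rewrite /normal3 coord2_u0 basis_word0 /cong3 cats0.
Qed.
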